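(* Let $n$ be a positive integer and $\alpha_0,\alpha_1,\dots,\alpha_n$ non-negative integers. Then $$\det_{0\le i,j\le n-1}\bigl(C_{\alpha_i+j}+C_{\alpha_{i+1}+j}\bigr)=\prod_{0\le i<j\le n}(\alpha_j-\alpha_i)\prod_{i=0}^{n-1}\frac{(i+n)!}{(2i)!}\prod_{i=0}^{n}\frac{(2\alpha_i)!}{\alpha_i!\,(\alpha_i+n)!}\times\sum_{s=0}^{n}\frac{\alpha_s!\,(\alpha_s+n)!}{(2\alpha_s)!\prod_{j=0}^{s-1}(\alpha_s-\alpha_j)\prod_{j=s+1}^{n}(\alpha_j-\alpha_s)}.$$
   Context: $C_m=\frac{1}{m+1}\binom{2m}{m}$ denotes the $m$-th Catalan number. *)

From mathcomp Require Import all_boot all_order all_algebra.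
Set Implicit Arguments. Unset Strict Implicit. Unset Printing Implicit Defensive.
Import Order.TTheory GRing.Theory Num.Theory.
Local Open Scope ring_scope.

Definition catalan (m : nat) : rat := ('C(2 * m, m))%:R / (m.+1)%:R.

From mathcomp Require Import all_boot all_order all_algebra.
From mathcomp Require Import zify ring lra.
Set Implicit Arguments. Unset Strict Implicit. Unset Printing Implicit Defensive.
Import Order.TTheory GRing.Theory Num.Theory.
Local Open Scope ring_scope.

(* The determinant of the adjacent row sums of the (n+1) x n matrix
   [(C_(alpha_i + j))] is the sum of its n+1 maximal minors.
   For each minor, [C_(a + j) = (2a)! / (a! (a + n)!) * P_j(a)] with [P_j] a
   polynomial of degree n - 1 not depending on [a], so [det (C_(b_i + j))] is
   the Vandermonde product of the [b_i] times the scalars times the determinant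
   of the coefficients of the [P_j]; that constant is found by evaluating the
   [P_j] at [-1, ..., -n], where the evaluation matrix is triangular. *)

Lemma natr_fact_neq0 (R : numDomainType) m : (m`!)%:R != 0 :> R.
Proof. by rewrite pnatr_eq0 -lt0n fact_gt0. Qed.

Lemma catalan_factE m : catalan m = (2 * m)`!%:R / (m`!%:R * m.+1`!%:R).
Proof.
have := bin_fact (leq_addl m m); rewrite addnK addnn -mul2n => <-.
rewrite /catalan factS !natrM; field.
by rewrite !natr_fact_neq0 paddr_eq0 ?oner_eq0.
Qed.

Lemma catalanS m : catalan m.+1 * m.+2%:R = catalan m * (2 * (2 * m).+1)%:R.
Proof.
rewrite !catalan_factE mulnS !factS !natrM.
have -> : (2 * m).+2%:R = 2 * m.+1%:R :> rat by rewrite -natrM mulnS.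
by field; rewrite natr_fact_neq0 !paddr_eq0 ?oner_eq0 ?pnatr_eq0.
Qed.

Definition catalan_scale (n a : nat) : rat := (2 * a)`!%:R / (a`!%:R * (a + n)`!%:R).

(* [catalan (a + j) / catalan_scale n a] is this polynomial in [a] of degree
   [n - 1]: the roots [-(2k+1)/2] come from [C_(m+1) / C_m = 2(2m+1) / (m+2)],
   the roots [-k] from the part of [(a + n)!] not cancelled by [(a + j + 1)!]. *)
Definition catalan_poly_roots (n j : nat) : seq rat :=
  [seq - ((2 * k).+1%:R / 2) | k <- index_iota 0 j]
  ++ [seq - k%:R | k <- index_iota j.+2 n.+1].

Definition catalan_poly (n j : nat) : {poly rat} :=
  (4 ^ j)%:R *: \prod_(x <- catalan_poly_roots n j) ('X - x%:P).

Lemma horner_catalan_poly n j x :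
  (catalan_poly n j).[x] = (4 ^ j)%:R * \prod_(0 <= k < j) (x + (2 * k).+1%:R / 2)
                           * \prod_(j.+2 <= k < n.+1) (x + k%:R).
Proof.
rewrite hornerZ horner_prod big_cat !big_map -mulrA.
by congr (_ * (_ * _)); apply: eq_bigr => k _; rewrite hornerXsubC opprK.
Qed.

Lemma size_catalan_poly n j : (j < n)%N -> (size (catalan_poly n j) <= n)%N.
Proof.
move=> ltjn; rewrite (leq_trans (size_scale_leq _ _)) //.
by rewrite size_prod_XsubC size_cat !size_map !size_iota; lia.
Qed.

Lemma fact_addn_split a n :
  (0 < n)%N -> ((a + n)`! = a.+1`! * \prod_(2 <= k < n.+1) (a + k))%N.
Proof.
move=> n_gt0; rewrite (@fact_split _ a.+1); last lia.
rewrite -[a.+2]add2n big_addn (_ : (a + n).+1 - a = n.+1)%N; last lia.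
by congr (_ * _); apply: eq_bigr => k _; rewrite addnC.
Qed.

Lemma catalan_scale_poly n a j :
  (j < n)%N -> catalan (a + j) = catalan_scale n a * (catalan_poly n j).[a%:R].
Proof.
elim: j => [|j IHj] ltjn.
  rewrite addn0 horner_catalan_poly big_geq // catalan_factE /catalan_scale.
  under eq_bigr do rewrite -natrD.
  rewrite fact_addn_split // natrM natr_prod expn0 !mul1r.
  have prod_neq0 : \prod_(2 <= k < n.+1) (a + k)%:R != 0 :> rat.
    by rewrite prodf_seq_neq0; apply/allP => k; rewrite mem_index_iota pnatr_eq0 /=; lia.
  by field; rewrite prod_neq0 !natr_fact_neq0.
rewrite addnS -[catalan _](mulfK (_ : (a + j).+2%:R != 0)) ?pnatr_eq0 //.
rewrite catalanS IHj; last lia.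
rewrite !horner_catalan_poly (big_nat_recr j 0) //= (@big_ltn _ _ _ j.+2 n.+1); last lia.
have natr_odd k : (2 * k).+1%:R = 2 * k%:R + 1 :> rat by rewrite -natr1 natrM.
have natr_add2 k : k.+2%:R = k%:R + 2 :> rat by rewrite -addn2 natrD.
rewrite natrM !natr_odd (natr_add2 (a + j)) (natr_add2 j) natrD expnS natrM.
by field; rewrite -natrD -natr_add2 pnatr_eq0.
Qed.

Lemma det_horner_mx (R : comRingType) n (p : 'I_n -> {poly R}) (x : 'I_n -> R) :
  (forall j, size (p j) <= n)%N ->
  \det (\matrix_(i, j) (p j).[x i]) =
  \det (\matrix_(k, j) (p j)`_k) * \prod_(i < n) \prod_(j < n | (i < j)%N) (x j - x i).
Proof.
move=> size_p.
have -> : \matrix_(i, j) (p j).[x i] =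
          (Vandermonde n (\row_j x j))^T *m \matrix_(k, j) (p j)`_k.
  apply/matrixP => i j; rewrite !mxE (horner_coef_wide _ (size_p j)).
  by apply: eq_bigr => k _; rewrite !mxE mulrC.
rewrite det_mulmx det_tr det_Vandermonde mulrC.
by congr (_ * _); apply: eq_bigr => i _; apply: eq_bigr => j _; rewrite !mxE.
Qed.

Section AdjacentRowSums.
Variable R : comRingType.

Definition upshift_mx n : 'M[R]_n.+1 := \matrix_(i, k) (k == i.+1 :> nat)%:R.

Lemma upshift_mulmx n p (M : 'M[R]_(n.+1, p)) i j :
  (upshift_mx n *m M) i j = if (i < n)%N then M (inord i.+1) j else 0.
Proof.
have upshiftE i0 k : upshift_mx n i0 k = (k == i0.+1 :> nat)%:R by rewrite mxE.
rewrite mxE; case: ltnP => [lt_in | le_ni].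
  rewrite (bigD1 (inord i.+1)) //= big1 => [|k ne_k]; rewrite upshiftE.
    by rewrite inordK // eqxx mul1r addr0.
  rewrite (_ : (k == i.+1 :> nat) = false) ?mul0r //.
  by apply: contraNF ne_k => /eqP k_eq; apply/eqP/val_inj; rewrite /= inordK -?k_eq.
apply: big1 => k _; rewrite upshiftE (_ : (k == i.+1 :> nat) = false) ?mul0r //.
by apply/negbTE; rewrite neq_ltn (leq_trans (ltn_ord k)).
Qed.

Lemma det_1_add_upshift n : \det (1%:M + upshift_mx n) = 1.
Proof.
rewrite -det_tr det_trig => [|]; last first.
  apply/is_trig_mxP => i j lt_ij.
  by rewrite !mxE -val_eqE /= (gtn_eqF lt_ij) (@ltn_eqF i j.+1 (ltnW lt_ij)) addr0.
by apply: big1 => i _; rewrite !mxE eqxx eqn_leq ltnn andbF addr0.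
Qed.

Lemma signr_addnn i : (-1) ^+ (i + i) = 1 :> R.
Proof. by rewrite addnn -mul2n exprM sqrrN !expr1n. Qed.

Variables (n : nat) (A : 'M[R]_(n.+1, n)).

Definition adjacent_row_sums : 'M[R]_n :=
  \matrix_(i, j) (A (widen_ord (leqnSn n) i) j + A (lift ord0 i) j).

(* Expanding along the extra column [(-1)^i] gives the alternating sum of the
   maximal minors of [A]; adding to every row the next one clears that column
   except in the last row and turns the remaining block into the adjacent sums. *)
Definition bordered_mx : 'M[R]_n.+1 :=
  \matrix_(i, j) oapp (A i) ((-1) ^+ i) (unlift ord_max j).

Lemma bordered_mx_max i : bordered_mx i ord_max = (-1) ^+ i.
Proof. by rewrite mxE unlift_none. Qed.

Lemma det_bordered_mx : \det bordered_mx = (-1) ^+ n * \sum_(s < n.+1) \det (row' s A).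
Proof.
have col_bordered : col' ord_max bordered_mx = A.
  by apply/matrixP => i j; rewrite !mxE liftK.
rewrite (expand_det_col _ ord_max) big_distrr; apply: eq_bigr => s _.
by rewrite bordered_mx_max /cofactor col_bordered mulrA -exprD addnA exprD signr_addnn mul1r.
Qed.

Lemma det_upshift_bordered_mx :
  \det ((1%:M + upshift_mx n) *m bordered_mx) = (-1) ^+ n * \det adjacent_row_sums.
Proof.
set M := (1%:M + upshift_mx n) *m bordered_mx.
have ME i j : M i j = bordered_mx i j + if (i < n)%N then bordered_mx (inord i.+1) j else 0.
  by rewrite /M mulmxDl mul1mx mxE upshift_mulmx.
have M_max i : M i ord_max = (i == ord_max)%:R * (-1) ^+ n.
  rewrite ME; case: (ltnP i n) => [lt_in | le_ni].
    rewrite !bordered_mx_max inordK // exprS mulN1r addrN (_ : (i == ord_max) = false) ?mul0r //.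
    by rewrite -val_eqE /= ltn_eqF.
  have -> : i = ord_max by apply/val_inj/eqP; rewrite eqn_leq le_ni -ltnS ltn_ord.
  by rewrite bordered_mx_max eqxx mul1r addr0.
rewrite (expand_det_col _ ord_max) (bigD1 ord_max) //= big1 => [|i ne_i]; last first.
  by rewrite M_max (negbTE ne_i) !mul0r.
rewrite M_max eqxx mul1r addr0 /cofactor signr_addnn mul1r; congr (_ * \det _).
apply/matrixP => i j; rewrite [LHS]mxE [LHS]mxE ME /= !mxE !liftK /=.
have bump_i : bump n i = i by rewrite /bump leqNgt ltn_ord.
rewrite bump_i ltn_ord; congr (A _ j + A _ j); apply: val_inj; rewrite /= ?inordK ?ltnS //.
Qed.

Lemma det_adjacent_row_sums : \det adjacent_row_sums = \sum_(s < n.+1) \det (row' s A).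
Proof.
have := det_upshift_bordered_mx; rewrite det_mulmx det_1_add_upshift mul1r det_bordered_mx.
by move=> /(congr1 ( *%R ((-1) ^+ n))); rewrite !mulrA -exprD signr_addnn !mul1r.
Qed.

End AdjacentRowSums.

Lemma big_gtn_mkord (R : Type) (idx : R) (op : Monoid.law idx) i n (F : nat -> R) :
  \big[op/idx]_(i.+1 <= j < n) F j = \big[op/idx]_(j < n | (i < j)%N) F j.
Proof. by rewrite (big_nat_widenl _ 0) // big_mkord. Qed.

Lemma vandermonde_prod_lift (R : comRingType) n (a : nat -> R) (s : 'I_n.+1) :
  \prod_(0 <= i < n.+1) \prod_(i.+1 <= j < n.+1) (a j - a i) =
  \prod_(i < n) \prod_(j < n | (i < j)%N) (a (lift s j) - a (lift s i))
  * \prod_(0 <= j < s) (a s - a j) * \prod_(s.+1 <= j < n.+1) (a j - a s).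
Proof.
have ltn_lift (i j : 'I_n) : (lift s i < lift s j)%N = (i < j)%N.
  by rewrite /= /bump; do 2 case: leqP => ?; apply/idP/idP; lia.
rewrite big_mkord /=; under eq_bigr => i _ do rewrite big_gtn_mkord.
rewrite (bigD1_ord s) //= big_gtn_mkord mulrC; congr (_ * _).
under eq_bigr => i _.
  rewrite big_mkcond (bigD1_ord s) //= -big_mkcond /=.
  under eq_bigl => j do rewrite ltn_lift.
  over.
rewrite big_split /= mulrC; congr (_ * _).
rewrite big_mkord (big_ord_widen n.+1 (fun i => a s - a i) (ltnW (ltn_ord s))).
by rewrite [RHS]big_mkcond (bigD1_ord s) //= ltnn mul1r.
Qed.

Lemma prod_natr_succ m : \prod_(0 <= k < m) (k.+1%:R : rat) = m`!%:R.
Proof.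
elim: m => [|m IHm]; first by rewrite big_geq.
by rewrite big_nat_recr //= IHm factS natrM mulrC.
Qed.

Lemma prod_natr_sub_fact j : \prod_(0 <= i < j) (i%:R - j%:R : rat) = (-1) ^+ j * j`!%:R.
Proof.
rewrite big_nat_rev (eq_big_nat _ _ (F2 := fun i => -1 * i.+1%:R)) => [|i /andP [_ lt_ij]].
  by rewrite big_split /= prodr_const_nat subn0 prod_natr_succ.
by rewrite add0n natrB //; ring.
Qed.

Lemma prod_odd_halves i :
  (4 ^ i)%:R * \prod_(0 <= k < i) (- (2 * k).+3%:R / 2 : rat)
  = (-1) ^+ i * (2 * i).+1`!%:R / i`!%:R.
Proof.
elim: i => [|i IHi]; first by rewrite big_geq // expn0 fact0 !mulr1 divr1.
rewrite big_nat_recr //= expnS natrM.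
rewrite (_ : forall a b c d : rat, a * b * (c * d) = a * (b * c) * d); last by move=> *; ring.
rewrite IHi (_ : (2 * i.+1).+1 = (2 * i).+3)%N ?mulnS // !factS !natrM exprS.
rewrite (_ : (2 * i).+2%:R = 2 * i.+1%:R :> rat); last by rewrite -natrM mulnS.
by field; rewrite natr_fact_neq0 paddr_eq0 ?oner_eq0.
Qed.

Lemma catalan_poly_root n i j :
  (i < j)%N -> (j < n)%N -> (catalan_poly n i).[- j.+1%:R] = 0.
Proof.
move=> lt_ij lt_jn; apply/eqP; rewrite horner_catalan_poly mulf_eq0; apply/orP; right.
rewrite prodf_seq_eq0; apply/hasP; exists j.+1; last by rewrite /= addNr.
by rewrite mem_index_iota; lia.
Qed.

Lemma catalan_poly_diag n i : (i < n)%N ->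
  (catalan_poly n i).[- i.+1%:R] = (-1) ^+ i * (2 * i).+1`!%:R / i`!%:R * (n - i.+1)`!%:R.
Proof.
move=> lt_in.
have odd_rev : \prod_(0 <= k < i) (- i.+1%:R + (2 * k).+1%:R / 2 : rat) =
               \prod_(0 <= k < i) (- (2 * k).+3%:R / 2).
  rewrite big_nat_rev; apply: eq_big_nat => k /andP [_ lt_ki].
  have sum_eq : ((2 * (0 + i - k.+1)).+1 + (2 * k).+3 = 2 * i.+1)%N by lia.
  by have := congr1 (fun m => m%:R : rat) sum_eq; rewrite !natrD !natrM; lra.
have tail_fact : \prod_(i.+2 <= k < n.+1) (- i.+1%:R + k%:R : rat) = (n - i.+1)`!%:R.
  rewrite -(add0n i.+2) big_addn subSS -prod_natr_succ; apply: eq_big_nat => k _.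
  by rewrite (_ : k + i.+2 = k.+1 + i.+1)%N ?natrD; [ring | lia].
by rewrite horner_catalan_poly odd_rev tail_fact prod_odd_halves.
Qed.

Lemma prod_fact_double n :
  (\prod_(0 <= i < n) ((2 * i)`! * (2 * i).+1`!)
   = \prod_(0 <= i < n) i`! * \prod_(0 <= i < n) (i + n)`!)%N.
Proof.
have -> : (\prod_(0 <= i < n) ((2 * i)`! * (2 * i).+1`!) = \prod_(0 <= m < 2 * n) m`!)%N.
  elim: n => [|n IHn]; first by rewrite !big_geq.
  by rewrite big_nat_recr //= IHn mulnS !big_nat_recr //= ?mulnA //; lia.
rewrite (@big_cat_nat _ _ _ n) /= ?leq_pmull // (big_addn 0 _ n) mul2n -addnn addnK.
by congr (_ * _)%N; apply: eq_bigr => i _; rewrite addnC.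
Qed.

Lemma prod_fact_rev n : (\prod_(i < n) (n - i.+1)`! = \prod_(i < n) i`!)%N.
Proof. by rewrite -(big_mkord xpredT (fun i => i`!)) big_rev_mkord subn0. Qed.

Lemma det_catalan_poly_coef n :
  \det (\matrix_(k, j) (catalan_poly n j)`_k : 'M[rat]_n)
  = \prod_(i < n) ((i + n)`!%:R / (2 * i)`!%:R).
Proof.
pose x (i : 'I_n) : rat := - i.+1%:R.
have := det_horner_mx (p := fun j : 'I_n => catalan_poly n j) x
                      (fun j => size_catalan_poly (ltn_ord j)).
rewrite -det_tr det_trig; last by apply/is_trig_mxP => i j lt_ij; rewrite !mxE catalan_poly_root.
have -> : \prod_(i < n) \prod_(j < n | (i < j)%N) (x j - x i) = \prod_(j < n) ((-1) ^+ j * j`!%:R).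
  rewrite (exchange_big_dep xpredT) //=; apply: eq_bigr => j _.
  rewrite -prod_natr_sub_fact big_mkord.
  rewrite (big_ord_widen n (fun i => i%:R - j%:R : rat) (ltnW (ltn_ord j))).
  by apply: eq_bigr => i _; rewrite /x -!natr1; ring.
under eq_bigr => i _ do rewrite !mxE catalan_poly_diag //.
rewrite !big_split /= !prodfV -!natr_prod prod_fact_rev.
have := congr1 (fun m => m%:R : rat) (prod_fact_double n).
rewrite !big_mkord big_split /= !natrM.
set E := (\prod_(i < n) (2 * i)`!)%:R; set O := (\prod_(i < n) _.+1`!)%:R.
set I := (\prod_(i < n) i`!)%:R; set T := (\prod_(i < n) (i + n)`!)%:R.
have natr_prod_fact_neq0 (f : nat -> nat) : (\prod_(i < n) (f i)`!)%:R != 0 :> rat.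
  by rewrite natr_prod; apply/prodf_neq0 => i _; apply: natr_fact_neq0.
have I_neq0 : I != 0 := natr_prod_fact_neq0 id.
have E_neq0 : E != 0 := natr_prod_fact_neq0 (fun i => 2 * i)%N.
have sign_neq0 : \prod_(i < n) (-1) ^+ i != 0 :> rat.
  by apply/prodf_neq0 => i _; rewrite signr_eq0.
move=> fact_eq diag_eq; apply: (mulIf (mulf_neq0 sign_neq0 I_neq0)).
have -> : T = E * O / I by rewrite fact_eq mulrAC divff ?mul1r.
by rewrite -diag_eq; field; apply/andP; split; [exact: E_neq0 | exact: I_neq0].
Qed.

Lemma det_catalan_shift n (b : 'I_n -> nat) :
  \det (\matrix_(i, j) catalan (b i + j))
  = \prod_(i < n) ((i + n)`!%:R / (2 * i)`!%:R)
    * \prod_(i < n) \prod_(j < n | (i < j)%N) ((b j)%:R - (b i)%:R)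
    * \prod_(i < n) catalan_scale n (b i).
Proof.
have -> : \matrix_(i, j) catalan (b i + j) =
          diag_mx (\row_i catalan_scale n (b i))
          *m \matrix_(i, j) (catalan_poly n j).[(b i)%:R] :> 'M_n.
  by apply/matrixP => i j; rewrite mul_diag_mx !mxE (catalan_scale_poly _ (ltn_ord j)).
rewrite det_mulmx det_diag det_horner_mx => [|j]; last exact: size_catalan_poly.
rewrite det_catalan_poly_coef mulrC; congr (_ * _).
by apply: eq_bigr => i _; rewrite mxE.
Qed.

Theorem corollary5 (n : nat) (alpha : nat -> nat) :
  (0 < n)%N ->
  (forall i j, (i <= n)%N -> (j <= n)%N -> alpha i = alpha j -> i = j) ->
  \det (\matrix_(i < n, j < n)
          (catalan (alpha i + j) + catalan (alpha i.+1 + j)) : 'M[rat]_n)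
  = (\prod_(0 <= i < n.+1) \prod_(i.+1 <= j < n.+1)
        ((alpha j)%:R - (alpha i)%:R : rat))
    * (\prod_(0 <= i < n) (((i + n)`!)%:R / ((2 * i)`!)%:R : rat))
    * (\prod_(0 <= i < n.+1)
        (((2 * alpha i)`!)%:R / ((alpha i)`!%:R * ((alpha i + n)`!)%:R) : rat))
    * \sum_(0 <= s < n.+1)
        (((alpha s)`!%:R * ((alpha s + n)`!)%:R)
         / (((2 * alpha s)`!)%:R
            * (\prod_(0 <= j < s) ((alpha s)%:R - (alpha j)%:R))
            * (\prod_(s.+1 <= j < n.+1) ((alpha j)%:R - (alpha s)%:R))) : rat).
Proof.
move=> _ alpha_inj.
pose A : 'M[rat]_(n.+1, n) := \matrix_(i, j) catalan (alpha i + j).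
have alpha_sub_neq0 i j : (i <= n)%N -> (j <= n)%N -> i != j ->
    (alpha i)%:R - (alpha j)%:R != 0 :> rat.
  move=> le_in le_jn; apply: contra; rewrite subr_eq0 eqr_nat.
  by move=> /eqP/(alpha_inj _ _ le_in le_jn)/eqP.
rewrite (_ : \matrix_(i, j) _ = adjacent_row_sums A); last by apply/matrixP => i j; rewrite !mxE.
rewrite det_adjacent_row_sums big_distrr big_mkord; apply: eq_bigr => s _ /=.
rewrite (_ : row' s A = \matrix_(k, l) catalan (alpha (lift s k) + l)); last first.
  by apply/matrixP => k l; rewrite !mxE.
rewrite det_catalan_shift (vandermonde_prod_lift (fun k => (alpha k)%:R) s).
rewrite [\prod_(0 <= i < n) _]big_mkord [\prod_(0 <= i < n.+1) _]big_mkord (bigD1_ord s) //=.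
have lt_sn : (s < n.+1)%N := ltn_ord s.
have below_neq0 : \prod_(0 <= j < s) ((alpha s)%:R - (alpha j)%:R) != 0 :> rat.
  rewrite prodf_seq_neq0; apply/allP => j; rewrite mem_index_iota => /andP [_ lt_js].
  by rewrite alpha_sub_neq0 // ?gtn_eqF //; lia.
have above_neq0 : \prod_(s.+1 <= j < n.+1) ((alpha j)%:R - (alpha s)%:R) != 0 :> rat.
  rewrite prodf_seq_neq0; apply/allP => j; rewrite mem_index_iota => /andP [lt_sj lt_jn].
  by rewrite alpha_sub_neq0 // ?gtn_eqF //; lia.
rewrite /catalan_scale; field.
by rewrite below_neq0 above_neq0 !natr_fact_neq0.
Qed.
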